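(* Let $g\ge2$ and let $q_i(x,y)=a_ix^2+2b_ixy+c_iy^2$ ($i=1,\ldots,g$) be integer binary quadratic forms, irreducible over the integers, with $a_i\equiv1\pmod4$ and $D:=\prod_{p\le2g}p\prod_ka_kc_k\delta_k\prod_{i<j}\operatorname{Res}(q_i,q_j)\neq0$. For a prime $p\nmid D$ define $$\omega(p):=p\sum_{\substack{c_1\mid p,\ldots,c_g\mid p\\ p\mid c_1\cdots c_g}}\mu(p)\mu(c_1)\cdots\mu(c_g)\frac{\rho(c_1,\ldots,c_g)}{(c_1\cdots c_g)^2}.$$ Then for every prime $p\nmid D$, $$\omega(p)=p^{-1}\bigl(\rho(p,1,\ldots,1)+\rho(1,p,1,\ldots,1)+\cdots+\rho(1,\ldots,1,p)+1-g\bigr).$$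
   Context: $\delta_k$ is the discriminant of $q_k$, $\operatorname{Res}$ the resultant, $\mu$ the Möbius function. For positive integers $c_1,\ldots,c_g$: $\Lambda_{\mathbf c}:=\{\mathbf x\in\mathbb Z^2:c_i\mid q_i(\mathbf x)\ \forall i\}$ and $\rho(\mathbf c):=\#(\Lambda_{\mathbf c}\cap[0,c_1\cdots c_g)^2)$. *)

From HB Require Import structures.
From mathcomp Require Import all_boot all_order all_algebra.
From mathcomp Require Import mpoly.
Set Implicit Arguments. Unset Strict Implicit. Unset Printing Implicit Defensive.
Import Order.TTheory GRing.Theory Num.Theory.
Local Open Scope ring_scope.

(* Moebius function: mu(n) = (-1)^k if n > 0 is a product of k distinct
   primes, 0 if n is not squarefree (and mu(0) := 0). *)
Definition mobius (n : nat) : int :=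
  if (0 < n)%N && all (fun p => logn p n == 1)%N (primes n)
  then (-1) ^+ size (primes n) else 0.

Definition qform (a b c : int) (x y : int) : int :=
  a * x ^+ 2 + 2 * b * x * y + c * y ^+ 2.

Definition qform_mpoly (a b c : int) : {mpoly int[2]} :=
  a%:MP * 'X_ord0 ^+ 2 + (2 * b)%:MP * ('X_ord0 * 'X_ord_max)
  + c%:MP * 'X_ord_max ^+ 2.

Definition irreducible_elt (R : idomainType) (x : R) : Prop :=
  [/\ x != 0, x \isn't a GRing.unit &
      forall y z : R, x = y * z -> y \is a GRing.unit \/ z \is a GRing.unit].

Definition qdisc (a b c : int) : int := (2 * b) ^+ 2 - 4 * a * c.

Definition qform_poly (a b c : int) : {poly int} :=
  a *: 'X ^+ 2 + (2 * b) *: 'X + c%:P.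

(* Resultant of two binary quadratic forms (Sylvester determinant of their
   coefficient vectors), via mathcomp's resultant of the dehomogenisations. *)
Definition qres (a1 b1 c1 a2 b2 c2 : int) : int :=
  resultant (qform_poly a1 b1 c1) (qform_poly a2 b2 c2).

Definition bigD (g : nat) (a b c : 'I_g -> int) : int :=
  (\prod_(p < (2 * g).+1 | prime p) (p : nat)%:Z)
  * (\prod_(k < g) (a k * c k * qdisc (a k) (b k) (c k)))
  * (\prod_(i < g) \prod_(j < g | (i < j)%N)
       qres (a i) (b i) (c i) (a j) (b j) (c j)).

Definition rho (g : nat) (a b c : 'I_g -> int) (cc : 'I_g -> nat) : nat :=
  #|[pred x : 'I_(\prod_(i < g) cc i) * 'I_(\prod_(i < g) cc i) |
      [forall i, ((cc i)%:Z %| qform (a i) (b i) (c i) (x.1 : nat)%:Z (x.2 : nat)%:Z)%Z]]|.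

(* omega(p) = p * sum_{c_i | p, p | c_1...c_g} mu(p) mu(c_1)...mu(c_g)
                     rho(c) / (c_1...c_g)^2.
   The c_i range over positive divisors of p, encoded in 'I_p.+1. *)
Definition omega (g : nat) (a b c : 'I_g -> int) (p : nat) : rat :=
  p%:R * \sum_(cc : {ffun 'I_g -> 'I_p.+1} |
                 [forall i, (0 < cc i)%N && ((cc i : nat) %| p)%N]
                 && (p %| \prod_(i < g) (cc i : nat))%N)
     ((mobius p)%:~R * (\prod_(i < g) (mobius (cc i))%:~R)
      * (rho a b c (fun i => (cc i : nat)))%:R
      / ((\prod_(i < g) (cc i : nat)) ^ 2)%:R).

Definition unitvec (g : nat) (p : nat) (i : 'I_g) : 'I_g -> nat :=
  fun j => if j == i then p else 1%N.

From HB Require Import structures.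
From mathcomp Require Import all_boot all_order all_algebra.
From mathcomp Require Import mpoly.
From mathcomp Require Import ring.
From Stdlib Require Import FunctionalExtensionality.
Set Implicit Arguments. Unset Strict Implicit. Unset Printing Implicit Defensive.
Import Order.TTheory GRing.Theory Num.Theory.
Local Open Scope ring_scope.

(* For p not dividing D, every common zero mod p of two distinct forms is
   (0, 0) mod p: if p does not divide y, then x/y mod p is a common root of q_i(X, 1)
   and q_j(X, 1), so p divides their resultant; if p divides y, then p | a_i x^2
   forces p | x.  The tuples c in the sum defining omega(p) are the vectors in
   {1, p}^g with a nonempty set S of entries equal to p.  When |S| >= 2, Lambda_c
   reduced mod p^|S| consists of the pairs divisible by p, so
   rho(c) = p^(2(|S|-1)) and the term is -(-1)^|S| / p; since
   sum_S (-1)^|S| = 0, these terms add up to (1 - g) / p, while |S| = 1 gives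
   the terms rho(p e_i) / p. *)

Lemma prime_coprimez (p : nat) (x : int) :
  prime p -> coprimez p%:Z x = ~~ (p%:Z %| x)%Z.
Proof. by move=> p_pr; rewrite coprimezE dvdzE /= prime_coprime. Qed.

Lemma Euclid_dvdzM (p : nat) (x y : int) :
  prime p -> (p%:Z %| x * y)%Z = (p%:Z %| x)%Z || (p%:Z %| y)%Z.
Proof. by move=> p_pr; rewrite !dvdzE abszM Euclid_dvdM. Qed.

Lemma dvdz_resultant (d z : int) (P Q : {poly int}) :
  (1 < size P)%N -> (1 < size Q)%N ->
  (d %| P.[z])%Z -> (d %| Q.[z])%Z -> (d %| resultant P Q)%Z.
Proof.
move=> P_gt1 Q_gt1 dP dQ; have [[U V] /= _ resPQ] := resultant_in_ideal P_gt1 Q_gt1.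
by rewrite -(hornerC (resultant P Q) z) resPQ hornerD !hornerM rpredD ?dvdz_mull.
Qed.

Lemma size_qform_poly_gt1 (a b c : int) : a != 0 -> (1 < size (qform_poly a b c))%N.
Proof.
move=> a_neq0; have : (qform_poly a b c)`_2 != 0.
  by rewrite /qform_poly !coefE /= mulr1 !mulr0 !addr0.
by apply: contraR; rewrite -leqNgt => size_le1; rewrite nth_default // (leq_trans size_le1).
Qed.

Lemma horner_qform_poly (a b c z : int) : (qform_poly a b c).[z] = qform a b c z 1.
Proof. by rewrite /qform_poly /qform !hornerE; ring. Qed.

Lemma dvdz_qform_dehomog (d u v a b c x y : int) : u * d + v * y = 1 ->
  (d %| qform a b c x y)%Z -> (d %| (qform_poly a b c).[x * v])%Z.
Proof.
move=> bezout d_q.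
have d_y : coprimez d y by apply/coprimezP; exists (u, v).
have scaled : (qform_poly a b c).[x * v] * y ^+ 2 =
    qform a b c x y - u * d * (a * x ^+ 2 * (v * y + 1) + 2 * b * x * y).
  have -> : u * d = 1 - v * y by rewrite -bezout addrK.
  by rewrite horner_qform_poly /qform; ring.
rewrite -(Gauss_dvdzl _ (coprimezXr 2 d_y)) scaled rpredB //.
by rewrite -mulrA dvdz_mull // dvdz_mulr.
Qed.

Lemma dvdz_x_of_qform (p : nat) (a b c x y : int) : prime p ->
  ~~ (p%:Z %| a)%Z -> (p%:Z %| y)%Z -> (p%:Z %| qform a b c x y)%Z -> (p%:Z %| x)%Z.
Proof.
move=> p_pr p_a p_y p_q.
have : (p%:Z %| a * (x * x))%Z.
  have -> : a * (x * x) = qform a b c x y - y * (2 * b * x + c * y) by rewrite /qform; ring.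
  by rewrite rpredB // dvdz_mulr.
by rewrite !Euclid_dvdzM // (negbTE p_a) orbb.
Qed.

Lemma dvdz_qform (d : int) (a b c x y : int) :
  (d %| x)%Z -> (d %| y)%Z -> (d %| qform a b c x y)%Z.
Proof.
move=> /dvdzP [u ->] /dvdzP [v ->].
have -> : qform a b c (u * d) (v * d) = qform a b c u v * d * d by rewrite /qform; ring.
by rewrite dvdz_mull.
Qed.

Lemma qform_common_zero_mod_prime (p : nat) (a1 b1 c1 a2 b2 c2 x y : int) :
  prime p -> ~~ (p%:Z %| a1)%Z -> ~~ (p%:Z %| a2)%Z ->
  ~~ (p%:Z %| qres a1 b1 c1 a2 b2 c2)%Z ->
  (p%:Z %| qform a1 b1 c1 x y)%Z -> (p%:Z %| qform a2 b2 c2 x y)%Z ->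
  (p%:Z %| x)%Z && (p%:Z %| y)%Z.
Proof.
move=> p_pr p_a1 p_a2 p_res p_q1 p_q2.
have [p_y | p_y] := boolP (p%:Z %| y)%Z.
  by rewrite (dvdz_x_of_qform p_pr p_a1 p_y p_q1).
have /coprimezP [[u v] /= bezout] : coprimez p%:Z y by rewrite prime_coprimez.
have a_neq0 (a : int) : ~~ (p%:Z %| a)%Z -> a != 0 by apply: contra => /eqP ->.
case/negP: p_res; apply: (@dvdz_resultant _ (x * v)).
- exact/size_qform_poly_gt1/a_neq0.
- exact/size_qform_poly_gt1/a_neq0.
- exact: dvdz_qform_dehomog bezout p_q1.
- exact: dvdz_qform_dehomog bezout p_q2.
Qed.

Definition qforms_separated (g p : nat) (a b c : 'I_g -> int) : Prop :=
  forall (i j : 'I_g) (x y : int), i != j ->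
    (p%:Z %| qform (a i) (b i) (c i) x y)%Z -> (p%:Z %| qform (a j) (b j) (c j) x y)%Z ->
    (p%:Z %| x)%Z && (p%:Z %| y)%Z.

Section PrimeNotDividingD.

Variables (g p : nat) (a b c : 'I_g -> int).
Hypotheses (p_pr : prime p) (p_D : ~~ (p%:Z %| bigD a b c)%Z).

Lemma bigD_ndvdz_a i : ~~ (p%:Z %| a i)%Z.
Proof.
apply: contra p_D => p_a; apply/dvdz_mulr/dvdz_mull.
by rewrite (bigD1 i) //= !dvdz_mulr.
Qed.

Lemma bigD_ndvdz_qres (i j : 'I_g) : (i < j)%N ->
  ~~ (p%:Z %| qres (a i) (b i) (c i) (a j) (b j) (c j))%Z.
Proof.
move=> lt_ij; apply: contra p_D => p_res; apply: dvdz_mull.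
by rewrite (bigD1 i) //= dvdz_mulr // (bigD1 j) //= dvdz_mulr.
Qed.

Lemma bigD_qforms_separated : qforms_separated p a b c.
Proof.
move=> i j x y; case: (ltngtP i j) => [lt_ij | lt_ji | /val_inj ->]; last by rewrite eqxx.
- by move=> _; apply: qform_common_zero_mod_prime (bigD_ndvdz_qres lt_ij);
    rewrite ?bigD_ndvdz_a.
- by move=> _ p_qi p_qj; apply: qform_common_zero_mod_prime (bigD_ndvdz_qres lt_ji) _ p_qi;
    rewrite ?bigD_ndvdz_a.
Qed.

End PrimeNotDividingD.

Lemma card_dvdn_ord (k p : nat) : (0 < p)%N -> #|[pred i : 'I_(k * p) | (p %| i)%N]| = k.
Proof.
move=> p_gt0; have mulp_lt (j : 'I_k) : (j * p < k * p)%N by rewrite ltn_pmul2r.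
pose mulp (j : 'I_k) : 'I_(k * p) := Ordinal (mulp_lt j).
have mulp_inj : injective mulp.
  by move=> j1 j2 /(congr1 val) /eqP; rewrite /= eqn_pmul2r // => /eqP /val_inj.
rewrite -[RHS]card_ord -(card_codom mulp_inj); apply: eq_card => i; rewrite inE.
apply/idP/codomP => [/dvdnP [q def_i] | [j ->]]; last exact: dvdn_mull.
have lt_qk : (q < k)%N by rewrite -(ltn_pmul2r p_gt0) -def_i.
by exists (Ordinal lt_qk); apply: val_inj; rewrite /= def_i.
Qed.

Lemma sum_sets_sign (R : pzRingType) (T : finType) :
  (0 < #|T|)%N -> \sum_(S : {set T}) (-1) ^+ #|S| = 0 :> R.
Proof.
move=> T_gt0; transitivity (\prod_(t : T) (-1 + 1) : R).
  by rewrite bigA_distr; apply: eq_big => // S _; rewrite -big_mkcond prodr_const.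
by rewrite addNr prodr_const expr0n eqn0Ngt T_gt0.
Qed.

Lemma sum_nonempty_sets (R : pzRingType) (T : finType) (X : {set T} -> R) :
  (0 < #|T|)%N ->
  \sum_(S : {set T} | S != set0) (if #|S| == 1%N then X S else - (-1) ^+ #|S|)
    = \sum_(t : T) X [set t] + 1 - #|T|%:R.
Proof.
move=> T_gt0; have sign_nonempty : \sum_(S : {set T} | S != set0) (-1) ^+ #|S| = -1 :> R.
  have := sum_sets_sign R T_gt0; rewrite (bigD1 set0) //= cards0 expr0 addrC.
  by move/eqP; rewrite addr_eq0 => /eqP.
have card1_neq0 (S : {set T}) : #|S| == 1%N -> S != set0.
  by move/eqP=> S1; rewrite -card_gt0 S1.
rewrite (eq_bigr (fun S : {set T} => - (-1) ^+ #|S| + (if #|S| == 1%N then X S - 1 else 0))).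
  rewrite big_split /= sumrN sign_nonempty opprK -big_mkcondr.
  rewrite (eq_bigl _ _ (fun S : {set T} => andb_idl (card1_neq0 S))) big_cards1 sumrB sumr_const.
  by rewrite addrA (addrC 1).
by move=> S _; case: eqP => [->|_]; rewrite ?addr0 // expr1 opprK addrC subrK.
Qed.

Definition setvec (g p : nat) (S : {set 'I_g}) (i : 'I_g) : nat :=
  if i \in S then p else 1%N.

Lemma setvec1 (g p : nat) (i : 'I_g) : setvec p [set i] =1 unitvec p i.
Proof. by move=> j; rewrite /setvec /unitvec in_set1. Qed.

Lemma prod_setvec (g p : nat) (S : {set 'I_g}) : (\prod_(i < g) setvec p S i)%N = (p ^ #|S|)%N.
Proof. by rewrite -big_mkcond /= prod_nat_const. Qed.

Lemma rho_eq (g : nat) (a b c : 'I_g -> int) (f f' : 'I_g -> nat) :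
  f =1 f' -> rho a b c f = rho a b c f'.
Proof. by move=> /functional_extensionality ->. Qed.

Lemma rho_setvec (g p : nat) (a b c : 'I_g -> int) (S : {set 'I_g}) : (0 < p)%N ->
  qforms_separated p a b c ->
  (1 < #|S|)%N -> rho a b c (setvec p S) = ((p ^ #|S|.-1) ^ 2)%N.
Proof.
move=> p_gt0 separated S_gt1; rewrite /rho.
have prodE : (\prod_(i < g) setvec p S i = p ^ #|S|.-1 * p)%N.
  by rewrite prod_setvec -expnSr prednK // ltnW.
have := card_dvdn_ord (p ^ #|S|.-1) p_gt0; rewrite -prodE => <-.
rewrite -mulnn -cardX; apply: eq_card => -[x y] /=.
rewrite !inE /=; apply/forallP/andP => [p_q | [p_x p_y] i]; last first.
  by rewrite /setvec; case: ifP => _; rewrite ?dvdz_qform ?dvd1z.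
have [i [j [iS jS ij]]] : exists i j, [/\ i \in S, j \in S & i != j].
  have /set0Pn [i iS] : S != set0 by rewrite -card_gt0 ltnW.
  have /set0Pn [j] : S :\ i != set0 by move: S_gt1; rewrite (cardsD1 i) iS add1n ltnS card_gt0.
  by rewrite !inE => /andP [ji jS]; exists i, j; rewrite eq_sym.
have := p_q i; have := p_q j; rewrite /setvec iS jS => p_qj p_qi.
by have /andP := separated _ _ _ _ ij p_qi p_qj; rewrite !dvdzE.
Qed.

Lemma mobius_prime (p : nat) : prime p -> mobius p = -1.
Proof. by move=> p_pr; rewrite /mobius primes_prime // prime_gt0 //= logn_prime // eqxx. Qed.

Lemma prod_mobius_setvec (R : pzRingType) (g p : nat) (S : {set 'I_g}) : prime p ->
  \prod_(i < g) ((mobius (setvec p S i))%:~R : R) = (-1) ^+ #|S|.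
Proof.
move=> p_pr; rewrite -prodr_const [RHS]big_mkcond /=; apply: eq_bigr => i _.
by rewrite /setvec; case: (i \in S); rewrite ?(mobius_prime p_pr) ?rmorphN1.
Qed.

Lemma sum_prime_divisor_tuples (R : nmodType) (g p : nat) (F : ('I_g -> nat) -> R) :
  prime p ->
  \sum_(cc : {ffun 'I_g -> 'I_p.+1} | [forall i, (0 < cc i)%N && ((cc i : nat) %| p)%N]
                                      && (p %| \prod_(i < g) (cc i : nat))%N)
     F (fun i => cc i)
  = \sum_(S : {set 'I_g} | S != set0) F (setvec p S).
Proof.
move=> p_pr; have p_gt0 := prime_gt0 p_pr.
pose tuple_of (S : {set 'I_g}) : {ffun 'I_g -> 'I_p.+1} := [ffun i => inord (setvec p S i)].
have tuple_ofE S i : (tuple_of S i : nat) = setvec p S i.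
  by rewrite ffunE inordK // ltnS /setvec; case: ifP => _; rewrite ?leqnn.
rewrite [LHS](reindex tuple_of) /=; last first.
  exists (fun cc : {ffun 'I_g -> 'I_p.+1} => [set i | (cc i : nat) == p]).
  - move=> S _; apply/setP => i; rewrite inE tuple_ofE /setvec.
    by case: (i \in S); rewrite ?eqxx // ltn_eqF ?prime_gt1.
  - move=> cc; rewrite inE => /andP [/forallP cc_dvd _]; apply/ffunP => i.
    apply: val_inj; rewrite /= tuple_ofE /setvec inE; case: eqP => [-> // | cc_neq_p].
    have /andP [_ cc_p] := cc_dvd i.
    by case/primeP: p_pr => _ /(_ _ cc_p) /orP [/eqP | /eqP].
apply: eq_big => [S | S _]; last first.
  by congr F; apply: functional_extensionality => i; rewrite tuple_ofE.
have -> : [forall i, (0 < tuple_of S i)%N && (tuple_of S i %| p)%N].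
  by apply/forallP => i; rewrite tuple_ofE /setvec; case: ifP => _; rewrite ?p_gt0 ?dvdnn ?dvd1n.
under eq_bigr do rewrite tuple_ofE.
by rewrite prod_setvec Euclid_dvdX // dvdnn card_gt0.
Qed.

Definition omega_summand (g : nat) (a b c : 'I_g -> int) (p : nat) (f : 'I_g -> nat) : rat :=
  (mobius p)%:~R * (\prod_(i < g) (mobius (f i))%:~R) * (rho a b c f)%:R
  / ((\prod_(i < g) f i) ^ 2)%:R.

Lemma omega_sum_sets (g : nat) (a b c : 'I_g -> int) (p : nat) : prime p ->
  omega a b c p = p%:R * \sum_(S : {set 'I_g} | S != set0) omega_summand a b c p (setvec p S).
Proof. by move=> p_pr; rewrite /omega (sum_prime_divisor_tuples (omega_summand a b c p)). Qed.

Lemma omega_summand_setvec (g p : nat) (a b c : 'I_g -> int) (S : {set 'I_g}) :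
  prime p -> qforms_separated p a b c -> S != set0 ->
  p%:R * omega_summand a b c p (setvec p S)
    = p%:R^-1 * (if #|S| == 1%N then (rho a b c (setvec p S))%:R else - (-1) ^+ #|S|).
Proof.
move=> p_pr separated S_neq0; have p_neq0 : p%:R != 0 :> rat by rewrite pnatr_eq0 -lt0n prime_gt0.
rewrite /omega_summand prod_mobius_setvec // prod_setvec mobius_prime // rmorphN1.
case: eqP => [-> | /eqP S_neq1]; first by rewrite expn1 natrX; field.
have S_gt1 : (1 < #|S|)%N by rewrite ltn_neqAle eq_sym S_neq1 card_gt0.
rewrite rho_setvec ?prime_gt0 //; case: #|S| S_gt1 => // n _ /=.
by rewrite !natrM !natrX !exprS; field; rewrite p_neq0 expf_neq0.
Qed.

Theorem lemma3p3 (g : nat) (a b c : 'I_g -> int) :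
  (2 <= g)%N ->
  (forall i, irreducible_elt (qform_mpoly (a i) (b i) (c i))) ->
  (forall i, (a i = 1 %[mod 4])%Z) ->
  bigD a b c != 0 ->
  forall p : nat, prime p -> ~~ ((p%:Z) %| bigD a b c)%Z ->
  omega a b c p =
    p%:R^-1 * ((\sum_(i < g) (rho a b c (unitvec p i))%:R) + 1 - g%:R).
Proof.
move=> g_ge2 _ _ _ p p_pr p_D.
have separated := bigD_qforms_separated p_pr p_D.
rewrite omega_sum_sets // mulr_sumr.
rewrite (eq_bigr _ (fun S S_neq0 => omega_summand_setvec p_pr separated S_neq0)).
rewrite -mulr_sumr sum_nonempty_sets card_ord ?(leq_trans _ g_ge2) //.
by under eq_bigr do rewrite (rho_eq _ _ _ (setvec1 p _)).
Qed.
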